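(* Let $A$ be a partial monoid and $R$ an equivalence relation on $A$ in the category of partial monoids. Then $R$ is effective if and only if $R$ is additive and the canonical map $\alpha\colon A/\!\!/R\to A/R$ is injective.
   Context: A partial magma is a set $A$ with a distinguished element $0$, a subset $A_2\subseteq A\times A$ of summable pairs and a map $+\colon A_2\to A$, such that $(0,a),(a,0)\in A_2$ and $a+0=0+a=a$ for all $a$, and $(a,b)\in A_2$ implies $(b,a)\in A_2$ and $a+b=b+a$. It is a partial monoid if moreover, for all $a,b,c$: $(a,b),(a+b,c)\in A_2$ iff $(b,c),(a,b+c)\in A_2$, and then $(a+b)+c=a+(b+c)$. Homomorphisms are maps $f$ with $f(0)=0$, $(f(a_1),f(a_2))\in B_2$ and $f(a_1+a_2)=f(a_1)+f(a_2)$ for $(a_1,a_2)\in A_2$. $A\times A$ has summable pairs those summable componentwise. An equivalence relation on the partial monoid $A$ is a partial submonoid $R\subseteq A\times A$ such that for every partial monoid $X$, $\mathrm{Hom}(X,R)$ is an equivalence relation on $\mathrm{Hom}(X,A)$. $R$ is effective if there is a partial monoid homomorphism $f\colon A\to B$ whose kernel pair is $R\rightrightarrows A$, i.e. $R=\{(a,a'):f(a)=f(a')\}$ with $R_2$ all pairs of elements of $R$ summable in $A\times A$. $R$ is additive if $R_2=(R\times R)\cap(A\times A)_2$. For additive $R$, $A/\!\!/R$ is the quotient set $A/R$ with summable pairs $\{([a_1],[a_2]):(a_1,a_2)\in A_2\}$ and $[a_1]+[a_2]=[a_1+a_2]$ (a partial magma). $\pi\colon A\to A/R$ denotes the coequalizer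 of the two projections $R\rightrightarrows A$ in the category of partial monoids (which exists), and $\alpha\colon A/\!\!/R\to A/R$ is the unique partial magma homomorphism with $\alpha([a])=\pi(a)$. *)

From Stdlib Require Import Relations.

(** A partial monoid: carrier, distinguished 0, and a partial sum.
    [padd a b = Some c] means (a,b) is summable with a+b = c;
    [padd a b = None] means (a,b) is not summable. *)
Record PMonoid := {
  car :> Type;
  pzero : car;
  padd : car -> car -> option car;
  padd_0l : forall a, padd pzero a = Some a;
  padd_0r : forall a, padd a pzero = Some a;
  padd_comm : forall a b, padd a b = padd b a;
  padd_assoc_def : forall a b c,
    (exists ab, padd a b = Some ab /\ padd ab c <> None) <->
    (exists bc, padd b c = Some bc /\ padd a bc <> None);
  padd_assoc : forall a b c ab bc r,
    padd a b = Some ab -> padd b c = Some bc -> padd ab c = Some r ->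
    padd a bc = Some r
}.

Arguments pzero {_}.
Arguments padd {_} _ _.

Definition is_hom (M N : PMonoid) (f : M -> N) : Prop :=
  f pzero = pzero /\
  forall a b c, padd a b = Some c -> padd (f a) (f b) = Some (f c).

Definition padd2 (A : PMonoid) (p q : A * A) : option (A * A) :=
  match padd (fst p) (fst q), padd (snd p) (snd q) with
  | Some x, Some y => Some (x, y)
  | _, _ => None
  end.

(** A partial submonoid of A x A: a subset [inR] of A x A together with a set
    [R2] of summable pairs of elements of R, such that R with the induced sum
    is a partial monoid and the inclusion R -> A x A is a homomorphism. *)
Definition is_partial_submonoid2 (A : PMonoid)
    (inR : A * A -> Prop) (R2 : A * A -> A * A -> Prop) : Prop :=
  inR (pzero, pzero) /\
  (forall p q, R2 p q ->
     inR p /\ inR q /\ exists s, padd2 A p q = Some s /\ inR s) /\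
  (forall p, inR p -> R2 p (pzero, pzero) /\ R2 (pzero, pzero) p) /\
  (forall p q, R2 p q -> R2 q p) /\
  (forall p q r, inR p -> inR q -> inR r ->
     ((exists s, R2 p q /\ padd2 A p q = Some s /\ R2 s r) <->
      (exists t, R2 q r /\ padd2 A q r = Some t /\ R2 p t))).

(** The relation on Hom(X,A) given by Hom(X,R): the pair (g,h) of homs
    X -> A is the image of a hom X -> R, i.e. x |-> (g x, h x) is a
    homomorphism X -> R. *)
Definition hom_rel (A : PMonoid) (inR : A * A -> Prop)
    (R2 : A * A -> A * A -> Prop) (X : PMonoid) (g h : X -> A) : Prop :=
  is_hom X A g /\ is_hom X A h /\
  (forall x, inR (g x, h x)) /\
  (forall x1 x2 x3, padd x1 x2 = Some x3 ->
     R2 (g x1, h x1) (g x2, h x2)).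

Definition is_pm_equivalence (A : PMonoid)
    (inR : A * A -> Prop) (R2 : A * A -> A * A -> Prop) : Prop :=
  is_partial_submonoid2 A inR R2 /\
  forall X : PMonoid,
    (forall g : X -> A, is_hom X A g -> hom_rel A inR R2 X g g) /\
    (forall g h : X -> A, hom_rel A inR R2 X g h -> hom_rel A inR R2 X h g) /\
    (forall g h k : X -> A, hom_rel A inR R2 X g h -> hom_rel A inR R2 X h k ->
        hom_rel A inR R2 X g k).

(** R is effective: it is the kernel pair of some homomorphism f : A -> B. *)
Definition is_effective (A : PMonoid)
    (inR : A * A -> Prop) (R2 : A * A -> A * A -> Prop) : Prop :=
  exists (B : PMonoid) (f : A -> B),
    is_hom A B f /\
    (forall a a', inR (a, a') <-> f a = f a') /\
    (forall p q, inR p -> inR q -> (R2 p q <-> padd2 A p q <> None)).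

Definition is_additive (A : PMonoid)
    (inR : A * A -> Prop) (R2 : A * A -> A * A -> Prop) : Prop :=
  forall p q, R2 p q <-> (inR p /\ inR q /\ padd2 A p q <> None).

Definition is_coequalizer (A : PMonoid) (inR : A * A -> Prop)
    (B : PMonoid) (pi : A -> B) : Prop :=
  is_hom A B pi /\
  (forall a a', inR (a, a') -> pi a = pi a') /\
  forall (C : PMonoid) (g : A -> C), is_hom A C g ->
    (forall a a', inR (a, a') -> g a = g a') ->
    (exists u : B -> C, is_hom B C u /\ forall a, u (pi a) = g a) /\
    (forall u1 u2 : B -> C, is_hom B C u1 -> is_hom B C u2 ->
       (forall a, u1 (pi a) = g a) -> (forall a, u2 (pi a) = g a) ->
       forall b, u1 b = u2 b).

(** The class map A -> A/R (quotient set by the relation R): [a] = [a'] iff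
    a and a' are related by the equivalence relation generated by R
    (which is R itself, R being an equivalence relation).
    alpha : A//R -> A/R, [a] |-> pi a, is injective iff
    pi a = pi a' implies [a] = [a']. *)
Definition same_class (A : PMonoid) (inR : A * A -> Prop) (a a' : A) : Prop :=
  clos_refl_sym_trans A (fun x y => inR (x, y)) a a'.

Definition alpha_injective (A : PMonoid) (inR : A * A -> Prop)
    (B : PMonoid) (pi : A -> B) : Prop :=
  forall a a', pi a = pi a' -> same_class A inR a a'.

(* An equivalence relation R in the category of partial monoids is, pointwise,
   an ordinary equivalence relation: testing Hom(X, R) against the partial
   monoid X = {0, 1} with 1 + 1 undefined, whose homomorphisms into A are the
   elements of A, gives reflexivity, symmetry and transitivity of R.
   If R is the kernel pair of f, then R2 consists of the summable pairs of R
   (additivity), and f factors through the coequalizer pi, so pi a = pi a'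
   forces f a = f a', i.e. (a, a') in R (injectivity of alpha).
   Conversely, if alpha is injective, pi a = pi a' puts a and a' in the same
   R-class, hence in R, so R is the kernel pair of pi, and additivity is the
   remaining condition on summable pairs. *)
From Stdlib Require Import Relations.

Lemma clos_rst_of_equivalence (T : Type) (r : relation T) :
  equivalence T r -> inclusion T (clos_refl_sym_trans T r) r.
Proof.
  intros [r_refl r_trans r_sym] x y Hxy.
  induction Hxy; eauto.
Qed.

Definition free1_add (a b : bool) : option bool :=
  match a, b with
  | false, _ => Some b
  | _, false => Some a
  | true, true => None
  end.

Lemma free1_add_assoc_def (a b c : bool) :
  (exists ab, free1_add a b = Some ab /\ free1_add ab c <> None) <->
  (exists bc, free1_add b c = Some bc /\ free1_add a bc <> None).
Proof.
  destruct a, b, c; simpl; split; intros [x [Hx Hsum]]; inversion Hx; subst;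
    simpl in *; solve [ eexists; split; [reflexivity | discriminate]
                      | exfalso; apply Hsum; reflexivity ].
Qed.

Lemma free1_add_assoc (a b c ab bc r : bool) :
  free1_add a b = Some ab -> free1_add b c = Some bc ->
  free1_add ab c = Some r -> free1_add a bc = Some r.
Proof.
  destruct a, b, c; simpl; intros Hab Hbc; inversion Hab; inversion Hbc;
    subst; simpl; congruence.
Qed.

Definition free1 : PMonoid.
Proof.
  refine (@Build_PMonoid bool false free1_add _ _ _
            free1_add_assoc_def free1_add_assoc).
  - intros []; reflexivity.
  - intros []; reflexivity.
  - intros [] []; reflexivity.
Defined.

Definition free1_lift (A : PMonoid) (a : A) : free1 -> A :=
  fun b : bool => if b then a else pzero.

Lemma free1_lift_hom (A : PMonoid) (a : A) : is_hom free1 A (free1_lift A a).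
Proof.
  split; [reflexivity |].
  intros [|] [|] c Hc; simpl in Hc; inversion Hc; subst; simpl;
    first [apply padd_0l | apply padd_0r].
Qed.

Section PartialSubmonoid.

Variables (A : PMonoid) (inR : A * A -> Prop) (R2 : A * A -> A * A -> Prop).
Hypothesis HR : is_partial_submonoid2 A inR R2.

Lemma R2_summable p q :
  R2 p q -> inR p /\ inR q /\ padd2 A p q <> None.
Proof.
  destruct HR as [_ [HR2 _]]; intros Hpq.
  destruct (HR2 p q Hpq) as [Hp [Hq [s [Hs _]]]].
  repeat split; auto; congruence.
Qed.

Lemma additive_iff_R2_summable :
  is_additive A inR R2 <->
  (forall p q, inR p -> inR q -> (R2 p q <-> padd2 A p q <> None)).
Proof.
  split.
  - intros Hadd p q Hp Hq; specialize (Hadd p q); tauto.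
  - intros Hsum p q; split.
    + apply R2_summable.
    + intros [Hp [Hq Hpq]]; apply Hsum; auto.
Qed.

(* Elements related by R give a homomorphism free1 -> R: the only summable
   pairs of free1 involve 0, and R2 contains every pair (p, (0,0)). *)
Lemma hom_rel_free1_lift a b :
  hom_rel A inR R2 free1 (free1_lift A a) (free1_lift A b) <-> inR (a, b).
Proof.
  destruct HR as [H00 [_ [Hzero _]]]; split.
  - intros [_ [_ [Hpt _]]]; exact (Hpt true).
  - intros Hab.
    split; [apply free1_lift_hom | split; [apply free1_lift_hom | split]].
    + intros []; simpl; auto.
    + intros [|] [|] x3 Hx; simpl in Hx; try discriminate; simpl;
        first [apply (Hzero _ H00) | apply (Hzero _ Hab)].
Qed.

End PartialSubmonoid.

Lemma pm_equivalence_equiv (A : PMonoid) inR R2 :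
  is_pm_equivalence A inR R2 -> equivalence A (fun a b => inR (a, b)).
Proof.
  intros [Hsub Hequiv].
  destruct (Hequiv free1) as [Hrefl [Hsym Htrans]].
  pose proof (hom_rel_free1_lift A inR R2 Hsub) as Hlift.
  split.
  - intros a; apply Hlift, Hrefl, free1_lift_hom.
  - intros a b c Hab Hbc; apply Hlift.
    apply Htrans with (free1_lift A b); apply Hlift; assumption.
  - intros a b Hab; apply Hlift, Hsym, Hlift, Hab.
Qed.

Section Coequalizer.

Variables (A : PMonoid) (inR : A * A -> Prop) (B : PMonoid) (pi : A -> B).
Hypothesis Hpi : is_coequalizer A inR B pi.

Lemma coequalizer_kernel_sub (C : PMonoid) (f : A -> C) :
  is_hom A C f -> (forall a a', inR (a, a') -> f a = f a') ->
  forall a a', pi a = pi a' -> f a = f a'.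
Proof.
  destruct Hpi as [_ [_ Huniv]]; intros Hf Hcoeq a a' Heq.
  destruct (Huniv C f Hf Hcoeq) as [[u [_ Hu]] _].
  rewrite <- !Hu, Heq; reflexivity.
Qed.

Lemma effective_alpha_injective R2 :
  is_effective A inR R2 -> alpha_injective A inR B pi.
Proof.
  intros [C [f [Hf [Hker _]]]] a a' Heq.
  apply rst_step, Hker.
  apply (coequalizer_kernel_sub C f Hf); auto.
  intros x y; apply Hker.
Qed.

Lemma alpha_injective_kernel :
  equivalence A (fun a b => inR (a, b)) -> alpha_injective A inR B pi ->
  forall a a', inR (a, a') <-> pi a = pi a'.
Proof.
  destruct Hpi as [_ [Hpr _]]; intros Hequiv Hinj a a'; split.
  - apply Hpr.
  - intros Heq; exact (clos_rst_of_equivalence _ _ Hequiv _ _ (Hinj _ _ Heq)).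
Qed.

End Coequalizer.

Theorem mainTheorem5 (A : PMonoid)
    (inR : A * A -> Prop) (R2 : A * A -> A * A -> Prop)
    (HR : is_pm_equivalence A inR R2)
    (B : PMonoid) (pi : A -> B) (Hpi : is_coequalizer A inR B pi) :
  is_effective A inR R2 <->
  (is_additive A inR R2 /\ alpha_injective A inR B pi).
Proof.
  pose proof (additive_iff_R2_summable A inR R2 (proj1 HR)) as Hadd_iff.
  split.
  - intros Heff; split.
    + destruct Heff as [C [f [_ [_ Hsum]]]]; apply Hadd_iff, Hsum.
    + exact (effective_alpha_injective A inR B pi Hpi R2 Heff).
  - intros [Hadd Hinj]; exists B, pi; split; [apply Hpi | split].
    + exact (alpha_injective_kernel A inR B pi Hpi
               (pm_equivalence_equiv A inR R2 HR) Hinj).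
    + apply Hadd_iff, Hadd.
Qed.
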